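(* Let $T$ be an arbitrary $(\mathcal{F}_t^X)$-stopping time. Then $\mathcal{F}_T^X = \mathcal{F}_{T \wedge T_{\mathrm{expl}}}^X = \sigma\big(\bigcup_{n \geq 1} \mathcal{F}_{T \wedge T_n}^X\big)$.
   Context: $E$ is a closed subset of $\mathbb{R}^d$ and $E_\Delta = E \cup \{\Delta\}$ its one-point compactification. $\Omega$ is the space of càdlàg functions $\omega: \mathbb{R}_+ \to E_\Delta$ such that $\omega(t-) = \Delta$ or $\omega(t) = \Delta$ implies $\omega(s) = \Delta$ for all $s \geq t$. $X_t(\omega) := \omega(t)$ is the coordinate process, $\mathcal{F}^X := \sigma(X_s: s \ge 0)$ and $\mathcal{F}_t^X := \sigma(X_s : 0 \le s \le t)$. Let $\|\cdot\|$ be the Euclidean norm on $\mathbb{R}^d$ with $\|\Delta\| := \infty$. Define the stopping times $T_\Delta := \inf\{t : X_t = \Delta\}$, $T'_n := \inf\{t : \|X_{t-}\| \geq n \text{ or } \|X_t\| \geq n\}$ ($n \ge 1$), $T_{\mathrm{expl}} := T_\Delta$ if $T'_n < T_\Delta$ for all $n$, and $T_{\mathrm{expl}} := \infty$ if $T'_n = T_\Delta$ for some $n$; and $T_n := T'_n$ if $T'_n < T_\Delta$, $T_n := \infty$ if $T'_n = T_\Delta$. *)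

From HB Require Import structures.
From mathcomp Require Import all_boot all_order all_algebra.
From mathcomp Require Import all_classical all_reals all_analysis.
Set Implicit Arguments. Unset Strict Implicit. Unset Printing Implicit Defensive.
Import Order.TTheory GRing.Theory Num.Theory.
Import numFieldTopology.Exports numFieldNormedType.Exports.
Local Open Scope classical_set_scope.
Local Open Scope ring_scope.

Section PathSpace.
Variables (R : realType) (d : nat) (E : set 'rV[R]_d).

(* Points of E_Delta = E u {Delta} are encoded as [option 'rV[R]_d],
   [None] being the cemetery point Delta. *)
Definition EDelta := option 'rV[R]_d.

Definition euclid (x : 'rV[R]_d) : R := Num.sqrt (\sum_i (x ord0 i) ^+ 2).

Definition enorm (x : EDelta) : \bar R :=
  if x is Some y then (euclid y)%:E else +oo%E.

(* Convergence in the one-point compactification E_Delta, as s -> t from the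
   left (s in ]t - delta, t[) resp. from the right (s in ]t, t + delta[).
   Neighbourhoods of Delta are {Delta} u {x in E : ||x|| > M}. *)
Definition conv_on (I : R -> R -> set R) (f : R -> EDelta) (t : R) (l : EDelta) :=
  match l with
  | Some x => forall e : R, 0 < e -> exists2 del : R, 0 < del &
      forall s, I t del s -> exists2 y, f s = Some y & euclid (y - x) < e
  | None => forall M : R, exists2 del : R, 0 < del &
      forall s, I t del s -> (M%:E < enorm (f s))%E
  end.

Definition left_int (t del : R) : set R := [set s | t - del < s < t].
Definition right_int (t del : R) : set R := [set s | t < s < t + del].

Definition lconv := conv_on left_int.
Definition rconv := conv_on right_int.

(* Paths omega : R_+ -> E_Delta are represented as functions on R extended by
   omega(t) = omega(0) for t < 0 (so that omega(0-) = omega(0)). *)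
Definition is_path (w : R -> EDelta) : Prop :=
  [/\ (forall t, t < 0 -> w t = w 0),
      (forall t x, w t = Some x -> E x),
      (forall t, rconv w t (w t)),
      (forall t, exists l, lconv w t l)
    & (forall t, 0 <= t -> (lconv w t None \/ w t = None) ->
         forall s, t <= s -> w s = None)].

Definition Omega := {w : R -> EDelta | is_path w}.

Definition X (t : R) (w : Omega) : EDelta := proj1_sig w t.
Definition Xminus (t : R) (w : Omega) : EDelta :=
  xget None [set l | lconv (proj1_sig w) t l].

Definition borelRd : set (set 'rV[R]_d) := <<s [set U : set 'rV[R]_d | open U] >>.
Definition borelEDelta : set (set EDelta) :=
  [set B | borelRd ([set x | B (Some x)] `&` E)].

Definition genX (s : R) : set (set Omega) :=
  [set X s @^-1` B | B in borelEDelta].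

Definition Ft (t : R) : set (set Omega) :=
  <<s \bigcup_(s in [set s | 0 <= s <= t]) genX s >>.
Definition Finf : set (set Omega) :=
  <<s \bigcup_(s in [set s | 0 <= s]) genX s >>.

Definition stopping_time (T : Omega -> \bar R) : Prop :=
  (forall w, (0 <= T w)%E) /\
  (forall t : R, 0 <= t -> Ft t [set w | (T w <= t%:E)%E]).

Definition FT (T : Omega -> \bar R) : set (set Omega) :=
  [set A | Finf A /\
     forall t : R, 0 <= t -> Ft t (A `&` [set w | (T w <= t%:E)%E])].

Definition TDelta (w : Omega) : \bar R :=
  ereal_inf [set t%:E | t in [set t | 0 <= t /\ X t w = None]].

Definition T' (n : nat) (w : Omega) : \bar R :=
  ereal_inf [set t%:E | t in [set t | 0 <= t /\
     ((n%:R%:E <= enorm (Xminus t w))%E \/ (n%:R%:E <= enorm (X t w))%E)]].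

Definition Texpl (w : Omega) : \bar R :=
  if `[< forall n : nat, (0 < n)%N -> (T' n w < TDelta w)%E >]
  then TDelta w else +oo%E.

Definition Tn (n : nat) (w : Omega) : \bar R :=
  if (T' n w < TDelta w)%E then T' n w else +oo%E.

End PathSpace.

(* Once a path reaches Delta it stays there, so on [X_t = Delta] every event of F^X
   is already decided at time t; as [T /\ T_expl <= t < T] forces [X_t = Delta], this
   gives F_T = F_(T /\ T_expl).  For the second identity, split an event A of F_T
   along [T <= T_n] and its complement H = [T_n < T for all n].  On [T <= T_n], A is
   in F_(T /\ T_n).  On H, T /\ T_n = T'_n < T_Delta for every n, and X_s is alive
   exactly when s < T'_n for some n, so X_s restricted to H is determined by the
   stopped sigma-algebras; hence so is the trace of all of F^X on H.  Throughout,
   T'_n is a stopping time because, by right-continuity and compactness of [0, t],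
   T'_n <= t iff ||X|| comes arbitrarily close to n on a countable dense subset of
   [0, t]. *)

From HB Require Import structures.
From mathcomp Require Import all_boot all_order all_algebra.
From mathcomp Require Import all_classical all_reals all_analysis.
From mathcomp Require Import lra.
Import Order.TTheory GRing.Theory Num.Theory.
Import numFieldTopology.Exports numFieldNormedType.Exports.
Local Open Scope classical_set_scope.
Local Open Scope ring_scope.
Set Implicit Arguments. Unset Strict Implicit. Unset Printing Implicit Defensive.

Section GeneratedSigmaAlgebra.
Variables (T : Type) (G : set (set T)).
Implicit Types (A B : set T) (F : (set T)^nat).

Lemma sigma_algebra_setC A : <<s G >> A -> <<s G >> (~` A).
Proof. by move=> GA; rewrite -setTD; exact: sigma_algebraCD. Qed.

Lemma sigma_algebra_setT : <<s G >> setT.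
Proof. by have := sigma_algebra_setC (@sigma_algebra0 _ setT G); rewrite setC0. Qed.

Lemma sigma_algebra_cst (P : Prop) : <<s G >> [set _ | P].
Proof.
have [p|np] := pselect P.
  by rewrite (_ : [set _ | P] = setT) ?predeqE //; exact: sigma_algebra_setT.
by rewrite (_ : [set _ | P] = set0) ?predeqE //; exact: sigma_algebra0.
Qed.

Lemma sigma_algebra_setU A B : <<s G >> A -> <<s G >> B -> <<s G >> (A `|` B).
Proof.
move=> GA GB; rewrite -bigcup2E; apply: sigma_algebra_bigcup => -[|[|k]] //=.
exact: sigma_algebra0.
Qed.

Lemma sigma_algebra_setI A B : <<s G >> A -> <<s G >> B -> <<s G >> (A `&` B).
Proof.
move=> GA GB; rewrite -(setCK (A `&` B)) setCI.
by apply: sigma_algebra_setC; apply: sigma_algebra_setU; exact: sigma_algebra_setC.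
Qed.

Lemma sigma_algebra_setD A B : <<s G >> A -> <<s G >> B -> <<s G >> (A `\` B).
Proof. by move=> GA GB; apply: sigma_algebra_setI => //; exact: sigma_algebra_setC. Qed.

Lemma sigma_algebra_bigcapT F : (forall k, <<s G >> (F k)) -> <<s G >> (\bigcap_k F k).
Proof.
move=> GF; rewrite -(setCK (\bigcap_k F k)) setC_bigcap.
by apply: sigma_algebra_setC; apply: sigma_algebra_bigcup => k; exact: sigma_algebra_setC.
Qed.

Lemma sigma_algebra_agree_on (H : set T) :
  sigma_algebra setT [set A | exists2 A', <<s G >> A' & A `&` H = A' `&` H].
Proof.
split.
- by exists set0; [exact: sigma_algebra0|rewrite !set0I].
- move=> A [A' GA' eA]; exists (~` A'); first exact: sigma_algebra_setC.
  rewrite setTD; apply/seteqP; split => w [nA Hw]; split => // hA.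
    by apply: nA; have : (A' `&` H) w by []; rewrite -eA => -[].
  by apply: nA; have : (A `&` H) w by []; rewrite eA => -[].
- move=> F hF; have {}hF k : exists A', <<s G >> A' /\ F k `&` H = A' `&` H.
    by have [A' GA' eA] := hF k; exists A'.
  have [f hf] := choice hF.
  exists (\bigcup_k f k); first by apply: sigma_algebra_bigcup => k; case: (hf k).
  by rewrite !setI_bigcupl; apply: eq_bigcupr => k _; case: (hf k).
Qed.

End GeneratedSigmaAlgebra.

Lemma ereal_nat_bound (R : realType) (x : \bar R) :
  (0 <= x)%E -> x != +oo%E -> exists m : nat, (x <= (m%:R : R)%:E)%E.
Proof.
case: x => [r| |] //; rewrite lee_fin => r0 _.
exists (Num.truncn r).+1; rewrite lee_fin; apply: ltW.
by have /andP[_] := truncn_itv r0.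
Qed.

Section Euclid.
Variables (R : realType) (d : nat).
Implicit Types (x y : 'rV[R]_d).

Lemma euclid_continuous : continuous (@euclid R d).
Proof.
move=> x.
have hs : {for x, continuous (fun y : 'rV[R]_d => \sum_i (y ord0 i) ^+ 2)}.
  rewrite -(fct_sumE _ _ (fun i (y : 'rV[R]_d) => (y ord0 i) ^+ 2)).
  apply: (big_ind (fun g : 'rV[R]_d -> R => {for x, continuous g})).
  - exact: cst_continuous.
  - by move=> f g hf hg; apply: continuousD.
  - move=> i _; rewrite /GRing.exp /=.
    by apply: (@continuousM _ _ (fun y : 'rV[R]_d => y ord0 i) (fun y => y ord0 i));
      apply: coord_continuous.
exact: (continuous_comp hs (@sqrt_continuous R _)).
Qed.

Lemma coord_le_euclid x j : `|x ord0 j| <= euclid x.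
Proof.
rewrite /euclid -sqrtr_sqr ler_sqrt; last by rewrite sumr_ge0 // => i _; exact: sqr_ge0.
by rewrite (bigD1 j) //= lerDl sumr_ge0 // => i _; exact: sqr_ge0.
Qed.

Lemma euclid_continuous_dist x (e : R) : 0 < e ->
  exists2 del, 0 < del & forall y, euclid (y - x) < del -> `|euclid y - euclid x| < e.
Proof.
move=> e0.
have : \forall y \near x, `|euclid x - euclid y| < e.
  by have /cvgrPdist_lt := @euclid_continuous x; apply.
move=> /(nbhs_ballP _ _).1 [del del0 hdel]; exists del => // y hy.
rewrite distrC; apply: hdel; split => // i j; rewrite (ord1 i) /ball /=.
apply: le_lt_trans hy; rewrite -opprB normrN.
by have := coord_le_euclid (y - x) j; rewrite !mxE.
Qed.

Lemma conv_on_euclid I (p : R -> EDelta R d) t x (e : R) :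
  conv_on I p t (Some x) -> 0 < e ->
  exists2 del, 0 < del & forall s, I t del s ->
    exists2 y, p s = Some y & `|euclid y - euclid x| < e.
Proof.
move=> hc e0; have [del1 del10 h1] := euclid_continuous_dist x e0.
have [del del0 h] := hc del1 del10; exists del => // s /h [y py hy].
by exists y => //; apply: h1.
Qed.

Lemma enorm_lt_ex (x y : EDelta R d) (L : \bar R) :
  (enorm x < L)%E -> (enorm y < L)%E ->
  exists c : R, [/\ (enorm x < c%:E)%E, (enorm y < c%:E)%E & (c%:E < L)%E].
Proof.
case: x => [a|]; last by rewrite /= [(+oo < _)%E]ltNge leey.
case: y => [b|]; last by rewrite /= [(+oo < _)%E]ltNge leey.
have ma : euclid a <= Num.max (euclid a) (euclid b) by rewrite le_max lexx.
have mb : euclid b <= Num.max (euclid a) (euclid b) by rewrite le_max lexx orbT.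
case: L => [l| |] /=; rewrite ?lte_fin.
- move=> al bl; have ml : Num.max (euclid a) (euclid b) < l by rewrite gt_max al bl.
  exists ((Num.max (euclid a) (euclid b) + l) / 2).
  by rewrite !lte_fin; split; lra.
- move=> _ _; exists (Num.max (euclid a) (euclid b) + 1).
  by rewrite !lte_fin ltry; split; lra.
- by rewrite ltNge leNye.
Qed.

Lemma borelRd_open (U : set 'rV[R]_d) : open U -> borelRd U.
Proof. by move=> oU; apply: sub_sigma_algebra. Qed.

Lemma borelRd_closed (U : set 'rV[R]_d) : closed U -> borelRd U.
Proof.
move=> cU; rewrite -[U]setCK; apply: sigma_algebra_setC.
by apply: borelRd_open; rewrite openC.
Qed.

Variable E : set 'rV[R]_d.

Lemma borelEDelta_None : borelEDelta E [set x | x = None].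
Proof.
rewrite /borelEDelta /= (_ : _ `&` _ = set0); first exact: sigma_algebra0.
by apply/seteqP; split => x // [].
Qed.

Lemma borelEDelta_enorm_gt (c : R) : closed E -> borelEDelta E [set x | (c%:E < enorm x)%E].
Proof.
move=> hE; apply: sigma_algebra_setI; last exact: borelRd_closed.
apply: borelRd_open.
rewrite (_ : [set x | _] = @euclid R d @^-1` [set y | c < y]).
  by have /continuousP := euclid_continuous; apply; exact: open_gt.
by apply/seteqP; split => x /=; rewrite lte_fin.
Qed.

End Euclid.

Section Segment.
Variable R : realType.

Lemma segment_near_bound (g : R -> \bar R) (a b : R) (F : set_system R) {FF : Filter F} :
  (forall x, a <= x <= b -> exists c : R, (\forall M \near F, c <= M) /\
     exists2 del, 0 < del & forall u, `|u - x| < del -> (g u <= c%:E)%E) ->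
  \forall M \near F, forall x, a <= x <= b -> (g x <= M%:E)%E.
Proof.
move=> h.
have /(compact_near_coveringP _).1 /(_ R F (fun M x => (g x <= M%:E)%E) FF) cov :=
  @segment_compact R a b.
apply: filterS (cov _) => [M HM x hx|]; first by apply: HM; rewrite /= in_itv /= hx.
move=> x; rewrite /= in_itv /= => /h [c [hc [del del0 hdel]]].
exists (ball x del, [set M | c <= M]); first by split => //; exact: nbhsx_ballx.
move=> [x' M] [/= bx cM]; apply: (le_trans (hdel x' _)); last by rewrite lee_fin.
by move: bx; rewrite /ball /= distrC.
Qed.

(* [t], followed by the rationals of [0, t] ([t] again at indices of other rationals). *)
Definition dense_seq (t : R) (k : nat) : R :=
  if k is k'.+1 then
    let q : R := ratr (odflt 0 (unpickle k')) in if 0 <= q <= t then q else t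
  else t.

Lemma dense_seq_in t k : 0 <= t -> 0 <= dense_seq t k <= t.
Proof. by move=> t0; case: k => [|k] /=; [|case: ifP => //]; rewrite t0 lexx. Qed.

Lemma dense_seq_dense t a b : 0 <= a -> a < b -> b <= t ->
  exists k, a < dense_seq t k < b.
Proof.
move=> a0 ab bt; have [q] := rat_in_itvoo ab; rewrite in_itv /= => /andP[aq qb].
exists (pickle q).+1.
have -> : dense_seq t (pickle q).+1 =
    let r : R := ratr (odflt 0 (unpickle (pickle q))) in if 0 <= r <= t then r else t.
  by [].
rewrite pickleK /=.
have -> : (0 <= ratr q :> R) && (ratr q <= t).
  by apply/andP; split; [exact: (le_trans a0 (ltW aq))|exact: (le_trans (ltW qb) bt)].
by rewrite aq qb.
Qed.

End Segment.

Section Paths.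
Variables (R : realType) (d : nat) (E : set 'rV[R]_d) (w : Omega E).

Lemma X_lt0 t : t < 0 -> X t w = X 0 w.
Proof. by case: (proj2_sig w) => h _ _ _ _; apply: h. Qed.

Lemma X_dead t s : 0 <= t -> t <= s -> X t w = None -> X s w = None.
Proof. by case: (proj2_sig w) => _ _ _ _ h t0 ts Xt; apply: (h t t0) => //; right. Qed.

Lemma X_rconv t : rconv (sval w) t (X t w).
Proof. by case: (proj2_sig w) => _ _ h _ _; apply: h. Qed.

Lemma Xminus_lconv t : lconv (sval w) t (Xminus t w).
Proof. by case: (proj2_sig w) => _ _ _ h _; apply: xgetPex; apply: h. Qed.

Lemma lconv_None_dead t : 0 <= t -> lconv (sval w) t None -> X t w = None.
Proof. by case: (proj2_sig w) => _ _ _ _ h t0 hl; apply: (h t t0 (or_introl hl)). Qed.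

Lemma enorm_X_near_lt r (c : R) :
  (enorm (X r w) < c%:E)%E -> (enorm (Xminus r w) < c%:E)%E ->
  exists2 del, 0 < del & forall u, `|u - r| < del -> (enorm (X u w) < c%:E)%E.
Proof.
have hr := X_rconv r; have hl := Xminus_lconv r.
case Xr: (X r w) hr => [x|//] hr; case: (Xminus r w) hl => [y|//] hl.
rewrite /= !lte_fin => hx hy.
have [d1 d10 h1] := conv_on_euclid hr (ltac:(by rewrite subr_gt0) : 0 < c - euclid x).
have [d2 d20 h2] := conv_on_euclid hl (ltac:(by rewrite subr_gt0) : 0 < c - euclid y).
exists (Order.min d1 d2); first by rewrite lt_min d10 d20.
have m1 : Order.min d1 d2 <= d1 by rewrite ge_min lexx.
have m2 : Order.min d1 d2 <= d2 by rewrite ge_min lexx orbT.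
move=> u; rewrite ltr_distl => /andP[a1 a2].
case: (ltgtP u r) => ur.
- have [z pz hz] := h2 u (ltac:(rewrite /left_int /=; apply/andP; split => //; lra)).
  rewrite /X pz /= lte_fin; move: hz; rewrite ltr_norml => /andP[_]; lra.
- have [z pz hz] := h1 u (ltac:(rewrite /right_int /=; apply/andP; split => //; lra)).
  rewrite /X pz /= lte_fin; move: hz; rewrite ltr_norml => /andP[_]; lra.
- by rewrite ur Xr /= lte_fin.
Qed.

Lemma Xminus_le s (c del : R) : 0 < del ->
  (forall u, s - del < u < s -> (enorm (X u w) <= c%:E)%E) ->
  (enorm (Xminus s w) <= c%:E)%E.
Proof.
move=> del0 h; have := Xminus_lconv s.
have pick d1 : 0 < d1 ->
    exists u, [/\ left_int s d1 u, s - del < u < s & (enorm (X u w) <= c%:E)%E].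
  move=> d10; pose u := s - Order.min d1 del / 2.
  have m0 : 0 < Order.min d1 del by rewrite lt_min d10 del0.
  have m1 : Order.min d1 del <= d1 by rewrite ge_min lexx.
  have m2 : Order.min d1 del <= del by rewrite ge_min lexx orbT.
  have hu : s - del < u < s by rewrite /u; apply/andP; split; lra.
  by exists u; split => //; [rewrite /left_int /u /=; apply/andP; split; lra|exact: h].
case: (Xminus s w) => [y|] /= hl.
- rewrite lee_fin leNgt; apply/negP => cy.
  have [d1 d10 h1] := conv_on_euclid hl (ltac:(by rewrite subr_gt0) : 0 < euclid y - c).
  have [u [/h1 [z pz hz] _]] := pick d1 d10.
  rewrite /X pz /= lee_fin; move: hz; rewrite ltr_norml => /andP[hz _]; lra.
- have [d1 d10 h1] := hl c; have [u [/h1 hu _ hc]] := pick d1 d10.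
  by have := lt_le_trans hu hc; rewrite ltxx.
Qed.

Lemma X_le_right_extension t (c c' : R) : 0 <= t -> c < c' ->
  (forall s, 0 <= s <= t -> (enorm (X s w) <= c%:E)%E) ->
  exists2 del, 0 < del & forall u, u < t + del -> (enorm (X u w) <= c'%:E)%E.
Proof.
move=> t0 cc' hc.
have [x Xt hx] : exists2 x, X t w = Some x & euclid x <= c.
  have := hc t; rewrite t0 lexx => /(_ isT).
  by case: (X t w) => [x|] //= h; exists x; rewrite // -lee_fin.
have hr : rconv (sval w) t (Some x) by rewrite -Xt; exact: X_rconv.
have [del del0 hdel] := conv_on_euclid hr (ltac:(by rewrite subr_gt0) : 0 < c' - c).
exists del => // u ut; case: (ltP u 0) => u0.
  rewrite X_lt0 //; apply: le_trans (hc 0 _) _; first by rewrite lexx t0.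
  by rewrite lee_fin ltW.
case: (leP u t) => ut'.
  by apply: le_trans (hc u _) _; [rewrite u0 ut'|rewrite lee_fin ltW].
have [z pz hz] := hdel u (ltac:(rewrite /right_int /=; apply/andP; split => //)).
by rewrite /X pz /= lee_fin; move: hz; rewrite ltr_norml => /andP[_ hz]; lra.
Qed.

Lemma X_near_bounded (F : set_system R) {FF : Filter F} (a b : R) (L : \bar R) :
  (forall c : R, (c%:E < L)%E -> \forall M \near F, c <= M) ->
  (forall r, a <= r <= b -> (enorm (X r w) < L)%E /\ (enorm (Xminus r w) < L)%E) ->
  \forall M \near F, forall r, a <= r <= b -> (enorm (X r w) <= M%:E)%E.
Proof.
move=> hF hL; apply: segment_near_bound => r /hL [hX hXm].
have [c [cX cXm /hF cM]] := enorm_lt_ex hX hXm.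
have [del del0 hdel] := enorm_X_near_lt cX cXm.
by exists c; split => //; exists del => // u /hdel /ltW.
Qed.

Lemma X_le_of_dense t (c : R) : 0 <= t ->
  (forall k, (enorm (X (dense_seq t k) w) <= c%:E)%E) ->
  forall s, 0 <= s <= t -> (enorm (X s w) <= c%:E)%E.
Proof.
move=> t0 hk s /andP[s0 st]; case: (ltgtP s t) => [lst|lts|->]; last exact: (hk 0%N).
- rewrite leNgt; apply/negP => hs.
  case Xs: (X s w) hs => [x|] hs; last first.
    by have := hk 0%N; rewrite /= (X_dead s0 (ltW lst) Xs).
  move: hs; rewrite /= lte_fin => hs.
  have hr : rconv (sval w) s (Some x) by rewrite -Xs; exact: X_rconv.
  have [del del0 hdel] := conv_on_euclid hr (ltac:(by rewrite subr_gt0) : 0 < euclid x - c).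
  have m1 : s < Order.min (s + del) t by rewrite lt_min lst andbT ltrDl.
  have m2 : Order.min (s + del) t <= s + del by rewrite ge_min lexx.
  have m3 : Order.min (s + del) t <= t by rewrite ge_min lexx orbT.
  have [k /andP[k1 k2]] := dense_seq_dense s0 m1 m3.
  have [z pz hz] : exists2 z, sval w (dense_seq t k) = Some z & `|euclid z - euclid x| < euclid x - c.
    by apply: hdel; rewrite /right_int /=; apply/andP; split => //; lra.
  have := hk k; rewrite /X pz /= lee_fin.
  by move: hz; rewrite ltr_norml => /andP[hz _]; lra.
- by move: st; rewrite leNgt lts.
Qed.

End Paths.

Section HittingTimes.
Variables (R : realType) (d : nat) (E : set 'rV[R]_d) (w : Omega E).

Lemma T'_ge0 n : (0 <= T' n w)%E.
Proof. by apply/ereal_infP => _ [s [s0 _] <-]; rewrite lee_fin. Qed.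

Lemma TDelta_ge0 : (0 <= TDelta w)%E.
Proof. by apply/ereal_infP => _ [s [s0 _] <-]; rewrite lee_fin. Qed.

Lemma Tn_ge0 n : (0 <= Tn n w)%E.
Proof. by rewrite /Tn; case: ifP => _ //; exact: T'_ge0. Qed.

Lemma Texpl_ge0 : (0 <= Texpl w)%E.
Proof. by rewrite /Texpl; case: asboolP => _ //; exact: TDelta_ge0. Qed.

Lemma T'_le n s : 0 <= s ->
  ((n%:R)%:E <= enorm (Xminus s w) \/ (n%:R)%:E <= enorm (X s w))%E ->
  (T' n w <= s%:E)%E.
Proof. by move=> s0 h; apply: ge_ereal_inf; exists s%:E => //; exists s. Qed.

Lemma T'_ge n (b c : R) : c < n%:R ->
  (forall u, u < b -> (enorm (X u w) <= c%:E)%E) -> (b%:E <= T' n w)%E.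
Proof.
move=> cn hb; apply/ereal_infP => _ [s [s0 hs] <-]; rewrite lee_fin leNgt.
apply/negP => sb; have Xs := hb s sb.
have Xms : (enorm (Xminus s w) <= c%:E)%E.
  apply: (@Xminus_le _ _ _ _ _ _ (b - s)); first by rewrite subr_gt0.
  by move=> u /andP[_ us]; apply: hb; lra.
by case: hs => /le_trans h; [have := h _ Xms|have := h _ Xs]; rewrite lee_fin => ?; lra.
Qed.

Lemma T'_le_dense n t : 0 <= t -> (T' n w <= t%:E)%E ->
  forall m : nat, exists k,
    (((n%:R - m.+1%:R^-1) : R)%:E < enorm (X (dense_seq t k) w))%E.
Proof.
move=> t0 hT m; apply/not_existsP => /= hk.
set e : R := m.+1%:R^-1.
have e0 : 0 < e by rewrite invr_gt0 ltr0n.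
have hc k : (enorm (X (dense_seq t k) w) <= (n%:R - e)%:E)%E.
  by rewrite leNgt; apply/negP; exact: hk k.
have c1 : n%:R - e < n%:R - e / 2 by lra.
have c2 : n%:R - e / 2 < n%:R by lra.
have [del del0 hdel] := X_le_right_extension t0 c1 (X_le_of_dense t0 hc).
by have := le_trans (T'_ge c2 hdel) hT; rewrite lee_fin; lra.
Qed.

Lemma dense_T'_le n t : 0 <= t ->
  (forall m : nat, exists k,
    (((n%:R - m.+1%:R^-1) : R)%:E < enorm (X (dense_seq t k) w))%E) ->
  (T' n w <= t%:E)%E.
Proof.
move=> t0 H; rewrite leNgt; apply/negP => tT.
have hlt r : 0 <= r <= t ->
    (enorm (X r w) < (n%:R)%:E)%E /\ (enorm (Xminus r w) < (n%:R)%:E)%E.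
  move=> /andP[r0 rt]; have nle : ~ (T' n w <= r%:E)%E.
    have rt' : (r%:E <= t%:E)%E by rewrite lee_fin.
    by move=> /le_trans /(_ rt'); rewrite leNgt tT.
  rewrite !ltNge; split; apply/negP => h; apply: nle.
    by apply: T'_le r0 _; right.
  by apply: T'_le r0 _; left.
have hF (c : R) : (c%:E < (n%:R)%:E)%E -> \forall M \near (n%:R : R)^'-, c <= M.
  by rewrite lte_fin => cn; near=> M; apply: ltW; near: M; exact: nbhs_left_gt.
have [M [hM Mn]] : exists M : R,
    (forall r, 0 <= r <= t -> (enorm (X r w) <= M%:E)%E) /\ M < n%:R.
  apply: (@filter_ex _ ((n%:R : R)^'-)); near=> M; split.
    by near: M; exact: X_near_bounded hF hlt.
  by near: M; exact: nbhs_left_lt.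
have [m hm] := ltr_add_invr Mn; have [k hk] := H m.
have := lt_le_trans hk (hM _ (dense_seq_in k t0)); rewrite lte_fin.
by move: hm; set e : R := m.+1%:R^-1; lra.
Unshelve. all: by end_near.
Qed.

Lemma T'_gt_alive s : 0 <= s -> X s w <> None -> exists n, (0 < n)%N /\ (s%:E < T' n w)%E.
Proof.
move=> s0 Xs.
have hlt r : 0 <= r <= s -> (enorm (X r w) < +oo)%E /\ (enorm (Xminus r w) < +oo)%E.
  move=> /andP[r0 rs]; have hl := Xminus_lconv w r.
  case Xr: (X r w) => [x|]; last by case: Xs; exact: X_dead r0 rs Xr.
  case: (Xminus r w) hl => [y|] hl; first by rewrite /= !ltry.
  by case: Xs; exact: X_dead r0 rs (lconv_None_dead r0 hl).
have hF (c : R) : (c%:E < +oo)%E -> \forall M \near +oo, c <= M.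
  by move=> _; exact: nbhs_pinfty_ge (num_real _).
have [M hM] := filter_ex (X_near_bounded hF hlt).
have [del del0 hdel] := X_le_right_extension s0 (ltr_pwDr ltr01 (lexx M)) hM.
set n := (Num.truncn (`|M| + 1)).+1.
have Mn : M + 1 < n%:R.
  have /andP[_ h1] := truncn_itv (ltac:(by rewrite addr_ge0) : 0 <= `|M| + 1).
  by have h2 := ler_norm M; rewrite /n; lra.
exists n; split => //; apply: lt_le_trans (T'_ge Mn hdel).
by rewrite lte_fin ltrDl.
Qed.

Lemma TDelta_le t : 0 <= t -> (TDelta w <= t%:E)%E <-> X t w = None.
Proof.
move=> t0; split; last first.
  by move=> Xt; apply: ge_ereal_inf; exists t%:E => //; exists t.
move=> hT; case Xt: (X t w) => [x|] //; exfalso.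
have hr : rconv (sval w) t (Some x) by rewrite -Xt; exact: X_rconv.
have [del del0 hdel] := conv_on_euclid hr ltr01.
have : ((t + del)%:E <= TDelta w)%E.
  apply/ereal_infP => _ [s [s0 hs] <-]; rewrite lee_fin leNgt; apply/negP => st.
  case: (leP s t) => st'; first by have := X_dead s0 st' hs; rewrite Xt.
  have [z pz _] := hdel s (ltac:(rewrite /right_int /=; apply/andP; split => //)).
  by move: hs; rewrite /X pz.
by move=> h; have := le_trans h hT; rewrite lee_fin; lra.
Qed.

Lemma Texpl_le t : (Texpl w <= t%:E)%E <->
  (forall n, (0 < n)%N -> (T' n w < TDelta w)%E) /\ (TDelta w <= t%:E)%E.
Proof. by rewrite /Texpl; case: asboolP => h; split => // -[]. Qed.

Lemma Tn_le n t : (Tn n w <= t%:E)%E <-> (T' n w <= t%:E)%E /\ (T' n w < TDelta w)%E.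
Proof.
by rewrite /Tn; case: ifP => _; split => [|[]] //; rewrite leye_eq.
Qed.

Lemma Tn_le_Texpl n : (0 < n)%N -> (Tn n w <= Texpl w)%E.
Proof.
move=> n0; rewrite /Texpl /Tn; case: asboolP => [h|_]; last exact: leey.
by rewrite h // ltW // h.
Qed.

End HittingTimes.

Section Filtration.
Variables (R : realType) (d : nat) (E : set 'rV[R]_d).
Implicit Types (S U V : Omega E -> \bar R) (A B : set (Omega E)).

Lemma Ft_preimage t s (B : set (EDelta R d)) : 0 <= s <= t -> borelEDelta E B ->
  Ft t (X s @^-1` B : set (Omega E)).
Proof. by move=> st hB; apply: sub_sigma_algebra; exists s => //; exists B. Qed.

Lemma Finf_preimage s (B : set (EDelta R d)) : 0 <= s -> borelEDelta E B ->
  Finf (X s @^-1` B : set (Omega E)).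
Proof. by move=> s0 hB; apply: sub_sigma_algebra; exists s => //; exists B. Qed.

Lemma Ft_monotone s t : s <= t -> Ft s `<=` (Ft t : set (set (Omega E))).
Proof.
move=> st; apply: smallest_sub; first exact: smallest_sigma_algebra.
move=> _ [u /andP[u0 us] [B hB <-]]; apply: Ft_preimage => //.
by rewrite u0 (le_trans us st).
Qed.

Lemma Ft_sub_Finf t : Ft t `<=` (@Finf R d E).
Proof.
apply: smallest_sub; first exact: smallest_sigma_algebra.
by move=> _ [u /andP[u0 _] [B hB <-]]; exact: Finf_preimage.
Qed.

Lemma stopping_T' n : closed E -> stopping_time (T' n : Omega E -> \bar R).
Proof.
move=> hE; split => [w|t t0]; first exact: T'_ge0.
rewrite (_ : [set w | _] = \bigcap_m \bigcup_k (X (dense_seq t k) @^-1`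
    [set x | ((n%:R - m.+1%:R^-1 : R)%:E < enorm x)%E])).
  apply: sigma_algebra_bigcapT => m; apply: sigma_algebra_bigcup => k.
  by apply: Ft_preimage; [exact: dense_seq_in|exact: borelEDelta_enorm_gt].
apply/seteqP; split => w /=.
  by move=> h m _; have [k hk] := T'_le_dense t0 h m; exists k.
by move=> h; apply: dense_T'_le => // m; have [k _ hk] := h m I; exists k.
Qed.

Lemma stopping_TDelta : stopping_time (@TDelta R d E).
Proof.
split => [w|t t0]; first exact: TDelta_ge0.
rewrite (_ : [set w | _] = X t @^-1` [set x | x = None]).
  by apply: Ft_preimage; [rewrite t0 lexx|exact: borelEDelta_None].
by apply/seteqP; split => w /= /(TDelta_le w t0).
Qed.

(* [U < V <= t] iff [U <= q < V <= t] for some term [q] of [dense_seq t]. *)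
Lemma Ft_ltI_le U V t : stopping_time U -> stopping_time V -> 0 <= t ->
  Ft t ([set w | (U w < V w)%E] `&` [set w | (V w <= t%:E)%E]).
Proof.
move=> [U0 hU] [_ hV] t0.
rewrite (_ : _ `&` _ = \bigcup_k ([set w | (U w <= (dense_seq t k)%:E)%E] `&`
   ~` [set w | (V w <= (dense_seq t k)%:E)%E] `&` [set w | (V w <= t%:E)%E])).
  apply: sigma_algebra_bigcup => k; have /andP[q0 qt] := dense_seq_in k t0.
  apply: sigma_algebra_setI; last exact: hV.
  apply: sigma_algebra_setI; first exact: (Ft_monotone qt (hU _ q0)).
  by apply: sigma_algebra_setC; exact: (Ft_monotone qt (hV _ q0)).
apply/seteqP; split => w /=; last first.
  by move=> [k _ [[h1 /negP h2] h3]]; split => //; apply: le_lt_trans h1 _; rewrite ltNge.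
move=> [UV Vt]; have := U0 w.
case Uw: (U w) UV => [u| |] UV u0; [|by rewrite ltNge leey in UV|by rewrite leeNy_eq in u0].
case Vw: (V w) UV Vt => [v| |] UV Vt;
  [|by rewrite leye_eq in Vt|by rewrite ltNge leNye in UV].
rewrite lee_fin in u0; rewrite lte_fin in UV; rewrite lee_fin in Vt.
have [k /andP[k1 k2]] := dense_seq_dense u0 UV Vt.
exists k => //; split; [split|] => /=; rewrite ?Uw ?Vw ?lee_fin ?(ltW k1) //.
by apply/negP; rewrite -ltNge.
Qed.

Lemma stopping_min U V : stopping_time U -> stopping_time V ->
  stopping_time (fun w => Order.min (U w) (V w)).
Proof.
move=> [U0 hU] [V0 hV]; split => [w|t t0]; first by rewrite le_min U0 V0.
rewrite (_ : [set w | _] = [set w | (U w <= t%:E)%E] `|` [set w | (V w <= t%:E)%E]).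
  by apply: sigma_algebra_setU; [exact: hU|exact: hV].
by apply/seteqP; split => w /=; rewrite ge_min => /orP.
Qed.

Lemma stopping_Texpl : closed E -> stopping_time (@Texpl R d E).
Proof.
move=> hE; split => [w|t t0]; first exact: Texpl_ge0.
rewrite (_ : [set w | _] = [set w | (TDelta w <= t%:E)%E] `&` \bigcap_n
   ([set w | (T' n.+1 w < TDelta w)%E] `&` [set w | (TDelta w <= t%:E)%E])).
  apply: sigma_algebra_setI; first exact: stopping_TDelta.2.
  apply: sigma_algebra_bigcapT => n.
  by apply: Ft_ltI_le => //; [exact: stopping_T'|exact: stopping_TDelta].
apply/seteqP; split => w /=.
  by move/Texpl_le => [hx ht]; split => // n _; split => //; exact: hx.
by move=> [ht hn]; apply/Texpl_le; split => // -[|n] // _; have [] := hn n I.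
Qed.

Lemma stopping_Tn n : closed E -> stopping_time (Tn n : Omega E -> \bar R).
Proof.
move=> hE; split => [w|t t0]; first exact: Tn_ge0.
rewrite (_ : [set w | _] = [set w | (T' n w <= t%:E)%E] `&`
   (~` [set w | (TDelta w <= t%:E)%E] `|`
   ([set w | (T' n w < TDelta w)%E] `&` [set w | (TDelta w <= t%:E)%E]))).
  apply: sigma_algebra_setI; first exact: (stopping_T' n hE).2.
  apply: sigma_algebra_setU; first by apply: sigma_algebra_setC; exact: stopping_TDelta.2.
  by apply: Ft_ltI_le => //; [exact: stopping_T'|exact: stopping_TDelta].
apply/seteqP; split => w /=.
  move/Tn_le => [h1 h2]; split => //.
  by case: (boolP (TDelta w <= t%:E)%E) => h; [right|left; apply/negP].
move=> [h1 h2]; apply/Tn_le; split => //; case: h2 => [h|[]//].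
by apply: (le_lt_trans h1); rewrite ltNge; apply/negP.
Qed.

End Filtration.

Section StoppedSigmaAlgebra.
Variables (R : realType) (d : nat) (E : set 'rV[R]_d).
Implicit Types (S U V : Omega E -> \bar R) (A B : set (Omega E)).

Lemma FT_sigma_algebra S : stopping_time S -> sigma_algebra setT (FT S).
Proof.
move=> [_ hS]; split.
- split; first exact: sigma_algebra0.
  by move=> t t0; rewrite set0I; exact: sigma_algebra0.
- move=> A [hA hAt]; rewrite setTD; split; first exact: sigma_algebra_setC.
  move=> t t0; rewrite (_ : _ `&` _ =
      [set w | (S w <= t%:E)%E] `\` (A `&` [set w | (S w <= t%:E)%E])).
    by apply: sigma_algebra_setD; [exact: hS|exact: hAt].
  by rewrite setDIr setDv setU0 setIC setDE.
- move=> F hF; split; first by apply: sigma_algebra_bigcup => k; case: (hF k).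
  move=> t t0; rewrite setI_bigcupl; apply: sigma_algebra_bigcup => k.
  by case: (hF k) => _; apply.
Qed.

Lemma FT_monotone U V : stopping_time V -> (forall w, (U w <= V w)%E) -> FT U `<=` FT V.
Proof.
move=> [_ hV] UV A [hA hAt]; split => // t t0.
rewrite (_ : _ `&` _ = (A `&` [set w | (U w <= t%:E)%E]) `&` [set w | (V w <= t%:E)%E]).
  by apply: sigma_algebra_setI; [exact: hAt|exact: hV].
apply/seteqP; split => w /=; last by move=> [[]].
by move=> [Aw h]; split => //; split => //; exact: le_trans (UV w) h.
Qed.

Lemma FT_of_sections S A : stopping_time S ->
  (forall t, 0 <= t -> Ft t (A `&` [set w | (S w <= t%:E)%E])) ->
  Finf (A `&` [set w | S w = +oo%E]) -> FT S A.
Proof.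
move=> [S0 _] hAt hAoo; split => //.
rewrite (_ : A = \bigcup_m (A `&` [set w | (S w <= (m%:R : R)%:E)%E]) `|`
    (A `&` [set w | S w = +oo%E])).
  apply: sigma_algebra_setU => //; apply: sigma_algebra_bigcup => m.
  by apply: Ft_sub_Finf; exact: hAt.
apply/seteqP; split => [w Aw|w [[m _ []]|[]]] //.
by have [Soo|/(ereal_nat_bound (S0 w)) [m hm]] := eqVneq (S w) +oo%E;
  [right|left; exists m].
Qed.

Lemma stopping_eqy_Finf S : stopping_time S -> Finf [set w | S w = +oo%E].
Proof.
move=> [S0 hS].
rewrite (_ : [set w | _] = ~` \bigcup_m [set w | (S w <= (m%:R : R)%:E)%E]).
  apply: sigma_algebra_setC; apply: sigma_algebra_bigcup => m.
  by apply: Ft_sub_Finf; exact: hS.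
apply/seteqP; split => w /=; first by move=> Soo [m _]; rewrite /= Soo leye_eq.
move=> h; apply/eqP; apply: contra_notT h => /(ereal_nat_bound (S0 w)) [m hm].
by exists m.
Qed.

(* On [U <= V] the minimum is [U], and [V < U] is decided at time [t] when [U <= t]. *)
Lemma FT_setI_le U V A : stopping_time U -> stopping_time V -> FT U A ->
  FT (fun w => Order.min (U w) (V w)) (A `&` [set w | (U w <= V w)%E]).
Proof.
move=> hU hV [hA hAt]; have hUV := stopping_min hU hV.
apply: FT_of_sections => // [t t0|].
  rewrite (_ : _ `&` _ = (A `&` [set w | (U w <= t%:E)%E]) `\`
      ([set w | (V w < U w)%E] `&` [set w | (U w <= t%:E)%E])).
    by apply: sigma_algebra_setD; [exact: hAt|exact: Ft_ltI_le].
  apply/seteqP; split => w /=.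
    move=> [[Aw UV]]; rewrite (min_l UV) => Ut; split => // -[VU _].
    by have := lt_le_trans VU UV; rewrite ltxx.
  move=> [[Aw Ut] /not_andP[/negP|//]]; rewrite -leNgt => UV.
  by split => //; rewrite (min_l UV).
rewrite (_ : _ `&` _ = A `&` [set w | Order.min (U w) (V w) = +oo%E]).
  by apply: sigma_algebra_setI => //; exact: stopping_eqy_Finf.
apply/seteqP; split => w /=; first by move=> [[]].
move=> [Aw Soo]; split => //; split => //.
have /andP[] : (+oo <= U w)%E && (+oo <= V w)%E by rewrite -le_min Soo.
by rewrite !leye_eq => /eqP -> /eqP ->.
Qed.

Lemma FT_le S s : stopping_time S -> 0 <= s -> FT S [set w | (S w <= s%:E)%E].
Proof.
move=> [_ hS] s0; split => [|t t0]; first by apply: Ft_sub_Finf; exact: hS.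
have [st|ts] := leP s t.
  by apply: sigma_algebra_setI; [exact: (Ft_monotone st (hS _ s0))|exact: hS].
rewrite (_ : _ `&` _ = [set w | (S w <= t%:E)%E]); first exact: hS.
apply/seteqP; split => [w []//|w h]; split => //.
by apply: le_trans h _; rewrite lee_fin ltW.
Qed.

Lemma FT_preimage_lt S s (B : set (EDelta R d)) : stopping_time S -> 0 <= s ->
  borelEDelta E B -> FT S (X s @^-1` B `&` [set w | (s%:E < S w)%E]).
Proof.
move=> [_ hS] s0 hB.
have eC : [set w | (s%:E < S w)%E] = ~` [set w | (S w <= s%:E)%E].
  by apply/seteqP; split => w /=; rewrite ltNge => /negP.
split => [|t t0].
  apply: sigma_algebra_setI; first exact: Finf_preimage.
  by rewrite eC; apply: sigma_algebra_setC; apply: Ft_sub_Finf; exact: hS.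
have [st|ts] := leP s t.
  apply: sigma_algebra_setI; last exact: hS.
  apply: sigma_algebra_setI; first by apply: Ft_preimage => //; rewrite s0.
  by rewrite eC; apply: sigma_algebra_setC; exact: (Ft_monotone st (hS _ s0)).
rewrite (_ : _ `&` _ = set0); first exact: sigma_algebra0.
apply/seteqP; split => w //= [[_ h1] h2].
by have := lt_le_trans h1 h2; rewrite lte_fin; lra.
Qed.

(* After [Delta] the path is frozen, so on [X t = Delta] all of [F^X] is known at
   time [t]. *)
Lemma Ft_setI_dead B t : Finf B -> 0 <= t -> Ft t (B `&` [set w | X t w = None]).
Proof.
move=> hB t0.
have hN : Ft t ([set w | X t w = None] : set (Omega E)).
  apply: (Ft_preimage (B := [set x | x = None])); first by rewrite t0 lexx.
  exact: borelEDelta_None.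
pose C := [set B : set (Omega E) | Ft t (B `&` [set w | X t w = None])].
suff : @Finf R d E `<=` C by apply.
apply: smallest_sub.
  split.
  - by rewrite /C /= set0I; exact: sigma_algebra0.
  - move=> A; rewrite /C /= setTD => hA.
    rewrite (_ : _ `&` _ = [set w | X t w = None] `\` (A `&` [set w | X t w = None])).
      exact: sigma_algebra_setD.
    by rewrite setDIr setDv setU0 setIC setDE.
  - by move=> F hF; rewrite /C /= setI_bigcupl; apply: sigma_algebra_bigcup.
move=> _ [s /= s0 [B0 hB0 <-]]; rewrite /C /=.
have [st|ts] := leP s t.
  by apply: sigma_algebra_setI => //; apply: Ft_preimage => //; rewrite s0.
rewrite (_ : _ `&` _ = [set _ | B0 None] `&` [set w | X t w = None]).
  by apply: sigma_algebra_setI => //; exact: sigma_algebra_cst.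
apply/seteqP; split => w /= [h1 h2]; split => //;
  by [rewrite -(X_dead t0 (ltW ts) h2)|rewrite (X_dead t0 (ltW ts) h2)].
Qed.

Lemma FT_min_Texpl S : closed E -> stopping_time S ->
  FT S = FT (fun w => Order.min (S w) (Texpl w)).
Proof.
move=> hE hS; apply/seteqP; split; last first.
  by apply: FT_monotone => // w; rewrite ge_min lexx.
move=> A [hA hAt]; split => // t t0.
rewrite (_ : _ `&` _ = (A `&` [set w | (S w <= t%:E)%E]) `|`
   ((A `&` [set w | X t w = None]) `&` [set w | (Texpl w <= t%:E)%E])).
  apply: sigma_algebra_setU; first exact: hAt.
  apply: sigma_algebra_setI; first exact: Ft_setI_dead.
  exact: (stopping_Texpl hE).2.
apply/seteqP; split => w /=.
  move=> [Aw]; rewrite ge_min => /orP[h|h]; first by left.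
  by right; split => //; split => //; move/Texpl_le: h => [_ /(TDelta_le w t0)].
by case=> [[Aw h]|[[Aw _] h]]; split => //; rewrite ge_min h ?orbT.
Qed.

End StoppedSigmaAlgebra.

Section Explosion.
Variables (R : realType) (d : nat) (E : set 'rV[R]_d) (T : Omega E -> \bar R).
Hypotheses (hE : closed E) (hT : stopping_time T).

Local Notation Tmin n := (fun w => Order.min (T w) (Tn n w)).
Local Notation FT_Tn := (<<s \bigcup_(n in [set n : nat | (0 < n)%N]) FT (Tmin n) >>).

Definition explodes_before : set (Omega E) := [set w | forall n, (Tn n.+1 w < T w)%E].

Lemma explodes_beforeE w n : explodes_before w -> (0 < n)%N ->
  (T' n w < TDelta w)%E /\ Order.min (T w) (Tn n w) = T' n w.
Proof.
move=> Hw n0; have := Hw n.-1; rewrite prednK // /Tn.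
by case: ifP => [c lt|_]; [rewrite min_r ?ltW|rewrite ltNge leey].
Qed.

Lemma stopping_Tmin n : stopping_time (Tmin n).
Proof. exact: stopping_min hT (stopping_Tn n hE). Qed.

Lemma FT_Tn_le n A : FT T A -> FT_Tn (A `&` [set w | (T w <= Tn n.+1 w)%E]).
Proof.
move=> hA; apply: sub_sigma_algebra; exists n.+1 => //.
exact: FT_setI_le hT (stopping_Tn _ hE) hA.
Qed.

Lemma FT_Tn_explodes_before : FT_Tn explodes_before.
Proof.
have hTT : FT T setT.
  by split => [|t t0]; [exact: sigma_algebra_setT|rewrite setTI; exact: hT.2].
rewrite (_ : explodes_before = ~` \bigcup_n (setT `&` [set w | (T w <= Tn n.+1 w)%E])).
  by apply: sigma_algebra_setC; apply: sigma_algebra_bigcup => n; exact: FT_Tn_le.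
apply/seteqP; split => [w Hw [n _ [_]]|w Hw n] /=; first by rewrite leNgt Hw.
by rewrite ltNge; apply/negP => h; apply: Hw; exists n.
Qed.

(* On [explodes_before], [Tmin n = T'_n < TDelta], so [X s] is alive iff [s < Tmin n]
   for some [n]. *)
Lemma preimage_agree_on_explodes s B : 0 <= s -> borelEDelta E B ->
  exists2 B', FT_Tn B' & X s @^-1` B `&` explodes_before = B' `&` explodes_before.
Proof.
move=> s0 hB.
exists ((\bigcup_n (X s @^-1` B `&` [set w | (s%:E < Tmin n.+1 w)%E])) `|`
  ([set _ | B None] `&` \bigcap_n [set w | (Tmin n.+1 w <= s%:E)%E])).
  apply: sigma_algebra_setU.
    apply: sigma_algebra_bigcup => n; apply: sub_sigma_algebra; exists n.+1 => //.
    exact: FT_preimage_lt (stopping_Tmin _) s0 hB.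
  apply: sigma_algebra_setI; first exact: sigma_algebra_cst.
  apply: sigma_algebra_bigcapT => n; apply: sub_sigma_algebra; exists n.+1 => //.
  exact: FT_le (stopping_Tmin _) s0.
apply/seteqP; split => w [Bw Hw]; split => //.
  case Xs: (X s w) => [x|].
    have [n [n0 hn]] := T'_gt_alive s0 (ltac:(by rewrite Xs) : X s w <> None).
    by left; exists n.-1 => //; split => //=; rewrite prednK // (explodes_beforeE Hw n0).2.
  right; split; first by rewrite /= -Xs.
  move=> n _ /=; have [hlt ->] := explodes_beforeE Hw (ltn0Sn n).
  by apply/ltW/(lt_le_trans hlt); exact/(TDelta_le w s0).
case: Bw => [[n _ [Bw _]]|[BN hall]] //.
case Xs: (X s w) => [x|]; last by rewrite /= Xs.
have [n [n0 hn]] := T'_gt_alive s0 (ltac:(by rewrite Xs) : X s w <> None).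
have := hall n.-1 I; rewrite /= prednK // (explodes_beforeE Hw n0).2 => h.
by have := lt_le_trans hn h; rewrite ltxx.
Qed.

Lemma Finf_agree_on_explodes A : Finf A ->
  exists2 A', FT_Tn A' & A `&` explodes_before = A' `&` explodes_before.
Proof.
pose C := [set A | exists2 A', FT_Tn A' & A `&` explodes_before = A' `&` explodes_before].
have : @Finf R d E `<=` C.
  apply: smallest_sub; first exact: sigma_algebra_agree_on.
  by move=> _ [s /= s0 [B hB <-]]; exact: preimage_agree_on_explodes.
by apply.
Qed.

Lemma FT_sub_FT_Tn : FT T `<=` FT_Tn.
Proof.
move=> A hA; have [A' GA' eA] := Finf_agree_on_explodes hA.1.
rewrite (_ : A = \bigcup_n (A `&` [set w | (T w <= Tn n.+1 w)%E]) `|`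
    (A' `&` explodes_before)).
  apply: sigma_algebra_setU; first by apply: sigma_algebra_bigcup => n; exact: FT_Tn_le.
  by apply: sigma_algebra_setI => //; exact: FT_Tn_explodes_before.
apply/seteqP; split => [w Aw|w [[n _ []]|[A'w Hw]]] //.
  have [[n TTn]|nTTn] := pselect (exists n, (T w <= Tn n.+1 w)%E); first by left; exists n.
  have Hw : explodes_before w.
    by move=> n; rewrite ltNge; apply/negP => h; apply: nTTn; exists n.
  by right; have : (A `&` explodes_before) w by []; rewrite eA.
by have : (A' `&` explodes_before) w by []; rewrite -eA => -[].
Qed.

Lemma FT_Tn_sub_FT_min_Texpl : FT_Tn `<=` FT (fun w => Order.min (T w) (Texpl w)).
Proof.
have hTe := stopping_min hT (stopping_Texpl hE).
apply: smallest_sub; first exact: FT_sigma_algebra.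
move=> A [n n0]; apply: FT_monotone => // w.
by rewrite le_min !ge_min lexx /= (Tn_le_Texpl w n0) !orbT.
Qed.

End Explosion.

Theorem proposition2p1 (R : realType) (d : nat) (E : set 'rV[R]_d)
  (hE : closed E) (T : Omega E -> \bar R) (hT : stopping_time T) :
  FT T = FT (fun w => Order.min (T w) (Texpl w)) /\
  FT (fun w => Order.min (T w) (Texpl w)) =
    <<s \bigcup_(n in [set n : nat | (0 < n)%N])
          FT (fun w => Order.min (T w) (Tn n w)) >>.
Proof.
have eT := FT_min_Texpl hE hT.
split => //; apply/seteqP; split; last exact: FT_Tn_sub_FT_min_Texpl.
by rewrite -eT; exact: FT_sub_FT_Tn.
Qed.
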